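(* Let $s$ be a term that reduces to an abstraction $t$ by a reduction sequence $s=s_0\succ\cdots\succ s_j=t$ whose largest term has size $m=\max_i|s_i|$. Then there are a program $P$ and a number $m'$ with $P\gg t$ and $m\le m'\le 2m$ such that the substitution machine reduces $\tau_s$ to $([],[P])$ by a sequence of steps whose largest state has size $m'$.
   Context: Terms (de Bruijn): $s::=n\mid st\mid\lambda s$, size $|n|=1+n$, $|\lambda s|=1+|s|$, $|st|=1+|s|+|t|$. Term substitution: $k^k_u=u$, $n^k_u=n$ ($n\ne k$), $(st)^k_u=(s^k_u)(t^k_u)$, $(\lambda s)^k_u=\lambda(s^{k+1}_u)$. Reduction $\succ$: $(\lambda s)(\lambda t)\succ s^0_{\lambda t}$; $s\succ s'\Rightarrow st\succ s't$; $t\succ t'\Rightarrow(\lambda s)t\succ(\lambda s)t'$. Programs are lists of commands $\mathsf{ret},\mathsf{var}\,n,\mathsf{lam},\mathsf{app}$ with sizes $|\mathsf{var}\,n|=1+n$, $|c|=1$ otherwise, $|P|=1+\sum_{c\in P}|c|$. Compilation: $\gamma n=[\mathsf{var}\,n]$, $\gamma(st)=\gamma s++\gamma t++[\mathsf{app}]$, $\gamma(\lambda s)=\mathsf{lam}::\gamma s++[\mathsf{ret}]$. $P\gg s$ iff $P=\gamma u$ and $s=\lambda u$ for some $u$. $\varphi P:=\varphi_{0,[]}P$ with $\varphi_{0,Q}(\mathsf{ret}::P)=(Q,P)$, $\varphi_{k+1,Q}(\mathsf{ret}::P)=\varphi_{k,Q++[\mathsf{ret}]}P$, $\varphi_{k,Q}(\mathsf{lam}::P)=\varphi_{k+1,Q++[\mathsf{lam}]}P$,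 $\varphi_{k,Q}(c::P)=\varphi_{k,Q++[c]}P$ for $c$ a $\mathsf{var}$ or $\mathsf{app}$, undefined otherwise. Program substitution: $(\mathsf{var}\,k::P)^k_Q=Q++P^k_Q$; $(\mathsf{var}\,n::P)^k_Q=\mathsf{var}\,n::P^k_Q$ ($n\ne k$); $(\mathsf{lam}::P)^k_Q=\mathsf{lam}::P^{k+1}_Q$; $(\mathsf{app}::P)^k_Q=\mathsf{app}::P^k_Q$; $(\mathsf{ret}::P)^0_Q=[\mathsf{ret}]$; $(\mathsf{ret}::P)^{k+1}_Q=\mathsf{ret}::P^k_Q$; $[]^k_Q=[]$. The substitution machine has states $(T,V)$ ($T,V$ lists of programs) and steps: $((\mathsf{lam}::P)::T,V)\succ(P'::_{tc}T,\ Q::V)$ if $\varphi P=(Q,P')$; $((\mathsf{app}::P)::T,\ Q::R::V)\succ(R^0_{\mathsf{lam}::Q++[\mathsf{ret}]}::(P::_{tc}T),\ V)$; where $P::_{tc}T:=T$ if $P=[]$, else $P::T$. Initial state $\tau_s:=([\gamma s],[])$. The size of a state $(T,V)$ is the sum of the sizes of all programs in $T$ and in $V$. *)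

From Stdlib Require Import List Arith.
Import ListNotations.

Inductive term : Type :=
| tvar (n : nat)
| tapp (s t : term)
| tlam (s : term).

Fixpoint tsize (s : term) : nat :=
  match s with
  | tvar n => 1 + n
  | tlam s => 1 + tsize s
  | tapp s t => 1 + tsize s + tsize t
  end.

Fixpoint tsubst (s : term) (k : nat) (u : term) : term :=
  match s with
  | tvar n => if Nat.eqb n k then u else tvar n
  | tapp s t => tapp (tsubst s k u) (tsubst t k u)
  | tlam s => tlam (tsubst s (S k) u)
  end.

Inductive tstep : term -> term -> Prop :=
| tstep_beta s t : tstep (tapp (tlam s) (tlam t)) (tsubst s 0 (tlam t))
| tstep_appL s s' t : tstep s s' -> tstep (tapp s t) (tapp s' t)
| tstep_appR s t t' : tstep t t' -> tstep (tapp (tlam s) t) (tapp (tlam s) t').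

Inductive cmd : Type :=
| cret
| cvar (n : nat)
| clam
| capp.

Definition program := list cmd.

Definition csize (c : cmd) : nat :=
  match c with
  | cvar n => 1 + n
  | _ => 1
  end.

Definition psize (P : program) : nat := 1 + fold_right (fun c acc => csize c + acc) 0 P.

Fixpoint compile (s : term) : program :=
  match s with
  | tvar n => [cvar n]
  | tapp s t => compile s ++ compile t ++ [capp]
  | tlam s => clam :: compile s ++ [cret]
  end.

Definition represents (P : program) (s : term) : Prop :=
  exists u, P = compile u /\ s = tlam u.

Fixpoint phi_aux (k : nat) (Q : program) (P : program) : option (program * program) :=
  match P with
  | [] => None
  | cret :: P' =>
      match k with
      | 0 => Some (Q, P')
      | S k' => phi_aux k' (Q ++ [cret]) P'
      end
  | clam :: P' => phi_aux (S k) (Q ++ [clam]) P'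
  | c :: P' => phi_aux k (Q ++ [c]) P'
  end.

Definition phi (P : program) : option (program * program) := phi_aux 0 [] P.

Fixpoint psubst (P : program) (k : nat) (Q : program) : program :=
  match P with
  | [] => []
  | cvar n :: P' => if Nat.eqb n k then Q ++ psubst P' k Q else cvar n :: psubst P' k Q
  | clam :: P' => clam :: psubst P' (S k) Q
  | capp :: P' => capp :: psubst P' k Q
  | cret :: P' =>
      match k with
      | 0 => [cret]
      | S k' => cret :: psubst P' k' Q
      end
  end.

Definition state : Type := (list program * list program)%type.

Definition tc_cons (P : program) (T : list program) : list program :=
  match P with
  | [] => T
  | _ => P :: T
  end.

Inductive mstep : state -> state -> Prop :=
| mstep_lam P T V Q P' :
    phi P = Some (Q, P') ->
    mstep ((clam :: P) :: T, V) (tc_cons P' T, Q :: V)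
| mstep_app P T Q R V :
    mstep ((capp :: P) :: T, Q :: R :: V)
          (psubst R 0 (clam :: Q ++ [cret]) :: tc_cons P T, V).

Definition sum_psizes (L : list program) : nat :=
  fold_right (fun P acc => psize P + acc) 0 L.

Definition ssize (st : state) : nat := sum_psizes (fst st) + sum_psizes (snd st).

Definition init_state (s : term) : state := ([compile s], []).

Definition max_size_is {A : Type} (size : A -> nat) (f : nat -> A) (j m : nat) : Prop :=
  (forall i, i <= j -> size (f i) <= m) /\ (exists i, i <= j /\ size (f i) = m).

From Stdlib Require Import List Arith Lia.
Import ListNotations.

(** Every state of the machine decodes to a term: the task stack is read as a
    sequence of compiled terms and pending [app] commands which, executed as a
    postfix program over the value stack (holding bodies of abstractions),
    rebuild a single term.  The term at the head of the task stack lands in the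
    hole of an evaluation context of the decoded term.  So a [lam] step merely
    moves an abstraction to the value stack (same decoded term, shorter task
    stack); an [app] step contracts the redex in the hole, because substitution
    commutes with compilation, [(γ s ++ P)^k_{γ u} = γ (s^k_u) ++ P^k_{γ u}];
    and a variable in the hole would make the decoded term stuck, which cannot
    happen along a reduction to an abstraction.  Hence the run from [τ_s]
    passes through states decoding [s_0], ..., [s_j] in order and halts in
    [([], [γ u])] with [t = λu].  A state is at least as large as the term it
    decodes and, because [|γ s| < 2|s|], at most twice as large, which yields
    [m <= m' <= 2m]. *)

Lemma tlam_irreducible (b y : term) : ~ tstep (tlam b) y.
Proof. intros H; inversion H. Qed.

Lemma tstep_deterministic (x y z : term) : tstep x y -> tstep x z -> y = z.
Proof.
  intros H; revert z; induction H; intros z Hz; inversion Hz; subst;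
    solve [ reflexivity | f_equal; auto
          | exfalso; eapply tlam_irreducible; eassumption ].
Qed.

Inductive frame : Type :=
| frame_left (t : term)
| frame_right (b : term).

Definition plug (fr : frame) (h : term) : term :=
  match fr with
  | frame_left t => tapp h t
  | frame_right b => tapp (tlam b) h
  end.

Fixpoint fill (F : list frame) (h : term) : term :=
  match F with
  | [] => h
  | fr :: F' => fill F' (plug fr h)
  end.

Lemma tstep_fill (F : list frame) (h h' : term) :
  tstep h h' -> tstep (fill F h) (fill F h').
Proof.
  revert h h'; induction F as [|[t|b] F IH]; intros h h' H; simpl; auto;
    apply IH; constructor; exact H.
Qed.

Definition stuck (x : term) : Prop :=
  (forall y, ~ tstep x y) /\ (forall b, x <> tlam b).

Lemma stuck_tvar (n : nat) : stuck (tvar n).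
Proof. split; [intros y H; inversion H | discriminate]. Qed.

Lemma stuck_plug (fr : frame) (h : term) : stuck h -> stuck (plug fr h).
Proof.
  intros [Hirr Hlam]; split; [|destruct fr; discriminate].
  intros y Hy; destruct fr; inversion Hy; subst;
    solve [ eapply Hlam; reflexivity | eapply Hirr; eassumption
          | eapply tlam_irreducible; eassumption ].
Qed.

Lemma stuck_fill (F : list frame) (h : term) : stuck h -> stuck (fill F h).
Proof. revert h; induction F; simpl; auto using stuck_plug. Qed.

Lemma compile_nonempty (s : term) : compile s <> [].
Proof.
  destruct s; simpl; try discriminate.
  intros H; apply app_eq_nil in H as [_ H]; apply app_eq_nil in H as [_ H].
  discriminate.
Qed.

Lemma phi_aux_compile (s : term) :
  forall k Q P, phi_aux k Q (compile s ++ P) = phi_aux k (Q ++ compile s) P.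
Proof.
  induction s; intros k Q P; simpl.
  - reflexivity.
  - rewrite <- !app_assoc, IHs1, IHs2; simpl; rewrite !app_assoc; reflexivity.
  - rewrite <- app_assoc, IHs; simpl; rewrite <- !app_assoc; reflexivity.
Qed.

Lemma phi_compile_ret (b : term) (P : program) :
  phi (compile b ++ cret :: P) = Some (compile b, P).
Proof. unfold phi; rewrite phi_aux_compile; reflexivity. Qed.

Lemma psubst_compile_app (s : term) : forall k u P,
  psubst (compile s ++ P) k (compile u)
  = compile (tsubst s k u) ++ psubst P k (compile u).
Proof.
  induction s; intros k u P; simpl.
  - destruct (n =? k); reflexivity.
  - rewrite <- !app_assoc, IHs1, IHs2; simpl; rewrite ?app_assoc; reflexivity.
  - rewrite <- app_assoc, IHs; simpl; rewrite <- app_assoc; reflexivity.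
Qed.

Lemma psubst_compile (s : term) (k : nat) (u : term) :
  psubst (compile s) k (compile u) = compile (tsubst s k u).
Proof.
  rewrite <- (app_nil_r (compile s)), psubst_compile_app.
  exact (app_nil_r _).
Qed.

Fixpoint body_size (P : program) : nat :=
  match P with
  | [] => 0
  | c :: P' => csize c + body_size P'
  end.

Lemma psize_body_size (P : program) : psize P = S (body_size P).
Proof. unfold psize; f_equal; induction P as [|c P IH]; simpl; auto. Qed.

Lemma body_size_app (P Q : program) :
  body_size (P ++ Q) = body_size P + body_size Q.
Proof. induction P as [|c P IH]; simpl; lia. Qed.

Lemma compile_size (s : term) :
  tsize s <= body_size (compile s) /\ S (body_size (compile s)) <= 2 * tsize s.
Proof. induction s; simpl; rewrite ?body_size_app; simpl; lia. Qed.

Lemma sum_psizes_cons (P : program) (T : list program) :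
  sum_psizes (P :: T) = psize P + sum_psizes T.
Proof. reflexivity. Qed.

Inductive item : Type :=
| item_term (s : term)
| item_app.

Definition item_code (it : item) : program :=
  match it with
  | item_term s => compile s
  | item_app => [capp]
  end.

Fixpoint code (L : list item) : program :=
  match L with
  | [] => []
  | it :: L' => item_code it ++ code L'
  end.

Definition item_size (it : item) : nat :=
  match it with
  | item_term s => tsize s
  | item_app => 1
  end.

Fixpoint items_size (L : list item) : nat :=
  match L with
  | [] => 0
  | it :: L' => item_size it + items_size L'
  end.

Fixpoint terms_size (l : list term) : nat :=
  match l with
  | [] => 0
  | x :: l' => tsize x + terms_size l'
  end.

Fixpoint eval_items (stk : list term) (L : list item) : option (list term) :=
  match L with
  | [] => Some stk
  | item_term s :: L' => eval_items (s :: stk) L'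
  | item_app :: L' =>
      match stk with
      | t :: s :: stk' => eval_items (tapp s t :: stk') L'
      | _ => None
      end
  end.

Lemma items_size_app (L L' : list item) :
  items_size (L ++ L') = items_size L + items_size L'.
Proof. induction L as [|it L IH]; simpl; lia. Qed.

Lemma code_size (L : list item) :
  items_size L <= body_size (code L) /\
  body_size (code L) + length L <= 2 * items_size L.
Proof.
  induction L as [|[s|] L IH]; simpl; rewrite ?body_size_app; simpl; [lia| |lia].
  pose proof (compile_size s); lia.
Qed.

Lemma task_stack_size (Ls : list (list item)) :
  Forall (fun L => L <> []) Ls ->
  items_size (concat Ls) <= sum_psizes (map code Ls) <= 2 * items_size (concat Ls).
Proof.
  induction 1 as [|L Ls HL _ IH]; [simpl; lia|].
  cbn [map concat]; rewrite sum_psizes_cons, items_size_app, psize_body_size.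
  pose proof (code_size L) as HL'.
  destruct L as [|it L]; [contradiction|]; simpl length in HL'; lia.
Qed.

Lemma value_stack_size (us : list term) :
  terms_size (map tlam us) <= sum_psizes (map compile us)
  <= 2 * terms_size (map tlam us).
Proof.
  induction us as [|u us IH]; [simpl; lia|].
  cbn [map terms_size]; rewrite sum_psizes_cons, psize_body_size.
  pose proof (compile_size u); simpl tsize; lia.
Qed.

Lemma eval_items_size (L : list item) : forall stk R,
  eval_items stk L = Some R -> terms_size R = terms_size stk + items_size L.
Proof.
  induction L as [|[s|] L IH]; intros stk R H; simpl in H.
  - injection H as <-; simpl; lia.
  - rewrite (IH _ _ H); simpl; lia.
  - destruct stk as [|t [|s stk]]; try discriminate.
    rewrite (IH _ _ H); simpl; lia.
Qed.

Lemma eval_items_context (L : list item) : forall A h us R,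
  eval_items (A ++ h :: map tlam us) L = Some R ->
  exists A' F W, R = A' ++ fill F h :: W /\
    forall h', eval_items (A ++ h' :: map tlam us) L = Some (A' ++ fill F h' :: W).
Proof.
  induction L as [|[s|] L IH]; intros A h us R H.
  - injection H as <-; exists A, [], (map tlam us); auto.
  - exact (IH (s :: A) h us R H).
  - destruct A as [|t [|s A]].
    + destruct us as [|b us]; simpl in H; [discriminate|].
      destruct (IH [] (tapp (tlam b) h) us R H) as (A' & F & W & -> & Hh).
      exists A', (frame_right b :: F), W; split; [reflexivity|].
      intros h'; exact (Hh (tapp (tlam b) h')).
    + destruct (IH [] (tapp h t) us R H) as (A' & F & W & -> & Hh).
      exists A', (frame_left t :: F), W; split; [reflexivity|].
      intros h'; exact (Hh (tapp h' t)).
    + exact (IH (tapp s t :: A) h us R H).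
Qed.

Lemma eval_items_hole (L : list item) (h : term) (us : list term) (x : term) :
  eval_items (h :: map tlam us) L = Some [x] ->
  exists F, x = fill F h /\
    forall h', eval_items (h' :: map tlam us) L = Some [fill F h'].
Proof.
  intros H.
  destruct (eval_items_context L [] h us [x] H) as (A & F & W & E & Hh).
  destruct A as [|a [|a' A]]; injection E as E1 E2; [|discriminate|discriminate].
  subst; exists F; split; [reflexivity | exact Hh].
Qed.

Lemma code_nil (L : list item) : code L = [] -> L = [].
Proof.
  destruct L as [|[s|] L]; simpl; [reflexivity| |discriminate].
  intros H; apply app_eq_nil in H as [H _]; destruct (compile_nonempty s H).
Qed.

Definition tc_cons_items (L : list item) (Ls : list (list item)) :
  list (list item) :=
  match L with
  | [] => Ls
  | _ => L :: Ls
  end.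

Lemma tc_cons_code (L : list item) (Ls : list (list item)) :
  tc_cons (code L) (map code Ls) = map code (tc_cons_items L Ls).
Proof.
  destruct L as [|it L]; [reflexivity|].
  change (tc_cons (code (it :: L)) (map code Ls) = code (it :: L) :: map code Ls).
  destruct (code (it :: L)) eqn:E; [apply code_nil in E; discriminate | reflexivity].
Qed.

Lemma concat_tc_cons_items (L : list item) (Ls : list (list item)) :
  concat (tc_cons_items L Ls) = L ++ concat Ls.
Proof. destruct L; reflexivity. Qed.

Lemma Forall_tc_cons_items (L : list item) (Ls : list (list item)) :
  Forall (fun L => L <> []) Ls -> Forall (fun L => L <> []) (tc_cons_items L Ls).
Proof. destruct L; simpl; auto; constructor; [discriminate | assumption]. Qed.

Lemma concat_tc_cons (P : program) (T : list program) :
  concat (tc_cons P T) = P ++ concat T.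
Proof. destruct P; reflexivity. Qed.

Definition decodes (st : state) (x : term) : Prop :=
  exists Ls us, st = (map code Ls, map compile us) /\
    Forall (fun L => L <> []) Ls /\
    eval_items (map tlam us) (concat Ls) = Some [x].

Definition task_length (st : state) : nat := length (concat (fst st)).

Lemma decodes_init (s : term) : decodes (init_state s) s.
Proof.
  exists [[item_term s]], []; split; [|split].
  - unfold init_state; simpl; rewrite app_nil_r; reflexivity.
  - repeat constructor; discriminate.
  - reflexivity.
Qed.

Lemma decodes_final (V : list program) (x : term) :
  decodes ([], V) x -> exists u, V = [compile u] /\ x = tlam u.
Proof.
  intros (Ls & us & E & _ & H); injection E as E1 ->.
  destruct Ls; [|discriminate]; injection H as H.
  destruct us as [|u [|u' us]]; try discriminate.
  injection H as <-; exists u; auto.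
Qed.

Lemma decodes_size (st : state) (x : term) :
  decodes st x -> tsize x <= ssize st <= 2 * tsize x.
Proof.
  intros (Ls & us & -> & HLs & H).
  apply eval_items_size in H; simpl in H.
  unfold ssize; cbn [fst snd].
  pose proof (task_stack_size Ls HLs); pose proof (value_stack_size us); lia.
Qed.

Definition progresses (st : state) (x : term) : Prop :=
  (exists st', mstep st st' /\ decodes st' x /\ task_length st' < task_length st) \/
  (exists st' x', mstep st st' /\ decodes st' x' /\ tstep x x') \/
  stuck x.

Lemma items_progress (it : item) (L : list item) (Ls : list (list item))
    (us : list term) (x : term) :
  Forall (fun L => L <> []) Ls ->
  eval_items (map tlam us) (it :: L ++ concat Ls) = Some [x] ->
  progresses (code (it :: L) :: map code Ls, map compile us) x.
Proof.
  intros HLs; destruct it as [s|].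
  - revert L; induction s as [n|a IHa b _|b]; intros L H; simpl in H.
    + right; right.
      destruct (eval_items_hole _ _ _ _ H) as (F & -> & _).
      apply stuck_fill, stuck_tvar.
    + replace (code (item_term (tapp a b) :: L))
        with (code (item_term a :: item_term b :: item_app :: L))
        by (simpl; rewrite <- !app_assoc; reflexivity).
      apply IHa; exact H.
    + left.
      assert (Hcode : code (item_term (tlam b) :: L) = clam :: compile b ++ cret :: code L)
        by (simpl; rewrite <- app_assoc; reflexivity).
      rewrite Hcode.
      exists (tc_cons (code L) (map code Ls), compile b :: map compile us).
      split; [|split].
      * constructor; apply phi_compile_ret.
      * exists (tc_cons_items L Ls), (b :: us).
        rewrite tc_cons_code, concat_tc_cons_items.
        split; [reflexivity | split; [apply Forall_tc_cons_items|]; assumption].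
      * unfold task_length; cbn [fst concat].
        rewrite concat_tc_cons; simpl; rewrite !length_app; simpl; lia.
  - right; left.
    destruct us as [|q [|r us]]; simpl in H; try discriminate.
    destruct (eval_items_hole _ _ _ _ H) as (F & -> & Hh).
    exists (compile (tsubst r 0 (tlam q)) :: tc_cons (code L) (map code Ls),
            map compile us), (fill F (tsubst r 0 (tlam q))).
    split; [|split].
    + rewrite <- psubst_compile; apply mstep_app.
    + exists ([item_term (tsubst r 0 (tlam q))] :: tc_cons_items L Ls), us.
      split; [|split].
      * cbn [map code item_code]; rewrite app_nil_r, tc_cons_code; reflexivity.
      * constructor; [discriminate | apply Forall_tc_cons_items; assumption].
      * simpl; rewrite concat_tc_cons_items; apply Hh.
    + apply tstep_fill; constructor.
Qed.

Lemma decodes_progresses (st : state) (x : term) :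
  decodes st x -> fst st <> [] -> progresses st x.
Proof.
  intros (Ls & us & -> & HLs & H) HT.
  destruct HLs as [|L Ls HL HLs]; [contradiction|].
  destruct L as [|it L]; [contradiction|].
  apply items_progress; assumption.
Qed.

Fixpoint max_upto (h : nat -> nat) (k : nat) : nat :=
  match k with
  | 0 => h 0
  | S k' => Nat.max (max_upto h k') (h (S k'))
  end.

Lemma max_size_is_max_upto {A : Type} (size : A -> nat) (g : nat -> A) (k : nat) :
  max_size_is size g k (max_upto (fun n => size (g n)) k).
Proof.
  induction k as [|k [Hle (n & Hn & Hat)]]; simpl.
  - split; [intros i Hi; replace i with 0 by lia; lia | exists 0; auto].
  - split.
    + intros i Hi; destruct (Nat.eq_dec i (S k)) as [->|Hne]; [lia|].
      specialize (Hle i ltac:(lia)); lia.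
    + destruct (Nat.max_spec (max_upto (fun n => size (g n)) k) (size (g (S k))))
        as [[_ ->]|[_ ->]]; [exists (S k) | exists n]; split; auto; lia.
Qed.

Definition scons {A : Type} (a : A) (g : nat -> A) (n : nat) : A :=
  match n with
  | 0 => a
  | S n' => g n'
  end.

Section Simulation.

Variables (f : nat -> term) (j : nat) (u : term).
Hypothesis f_steps : forall i, i < j -> tstep (f i) (f (S i)).
Hypothesis f_end : f j = tlam u.

Lemma reduct_index (i : nat) (x : term) :
  i <= j -> tstep (f i) x -> i < j /\ x = f (S i).
Proof.
  intros Hi Hx; destruct (Nat.eq_dec i j) as [->|Hne].
  - rewrite f_end in Hx; destruct (tlam_irreducible _ _ Hx).
  - split; [lia|]; apply (tstep_deterministic (f i)); [exact Hx | apply f_steps; lia].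
Qed.

Lemma reduct_not_stuck (i : nat) : i <= j -> ~ stuck (f i).
Proof.
  intros Hi [Hirr Hlam]; destruct (Nat.eq_dec i j) as [->|Hne].
  - exact (Hlam u f_end).
  - apply (Hirr (f (S i))), f_steps; lia.
Qed.

Lemma reduct_lam_index (i : nat) (b : term) : i <= j -> f i = tlam b -> i = j /\ b = u.
Proof.
  intros Hi Hb; destruct (Nat.eq_dec i j) as [->|Hne].
  - rewrite f_end in Hb; injection Hb as ->; auto.
  - exfalso; apply (tlam_irreducible b (f (S i))); rewrite <- Hb; apply f_steps; lia.
Qed.

Definition simulation (i : nat) (g : nat -> state) (k : nat) : Prop :=
  (forall n, n < k -> mstep (g n) (g (S n))) /\
  (forall n, n <= k -> exists i', i <= i' <= j /\ decodes (g n) (f i')) /\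
  (forall i', i <= i' <= j -> exists n, n <= k /\ decodes (g n) (f i')) /\
  g k = ([], [compile u]).

Lemma simulation_final (i : nat) (st : state) :
  i <= j -> decodes st (f i) -> fst st = [] -> simulation i (fun _ => st) 0.
Proof.
  intros Hi Hst HT; destruct st as [T V]; simpl in HT; subst T.
  destruct (decodes_final _ _ Hst) as (b & -> & Hb).
  destruct (reduct_lam_index i b Hi Hb) as [-> ->].
  split; [intros n Hn; lia | split; [|split]].
  - intros n _; exists j; auto.
  - intros i' Hi'; replace i' with j by lia; exists 0; auto.
  - reflexivity.
Qed.

Lemma simulation_scons (i i' : nat) (st : state) (g : nat -> state) (k : nat) :
  i <= j -> i <= i' <= S i -> decodes st (f i) -> mstep st (g 0) ->
  simulation i' g k -> simulation i (scons st g) (S k).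
Proof.
  intros Hi Hi' Hst Hstep (Hsteps & Hdec & Hcover & Hend).
  split; [|split; [|split]].
  - intros [|n] Hn; simpl; [exact Hstep | apply Hsteps; lia].
  - intros [|n] Hn; simpl; [exists i; split; [lia | exact Hst]|].
    destruct (Hdec n ltac:(lia)) as (i'' & Hi'' & Hd).
    exists i''; split; [lia | exact Hd].
  - intros i'' Hi''; destruct (Nat.eq_dec i'' i) as [->|Hne].
    + exists 0; split; [lia | exact Hst].
    + destruct (Hcover i'' ltac:(lia)) as (n & Hn & Hd).
      exists (S n); split; [lia | exact Hd].
  - exact Hend.
Qed.

Lemma simulation_within (i : nat) :
  i <= j ->
  (i < j -> forall st, decodes st (f (S i)) ->
     exists g k, g 0 = st /\ simulation (S i) g k) ->
  forall st, decodes st (f i) -> exists g k, g 0 = st /\ simulation i g k.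
Proof.
  intros Hi Hnext st; induction st as [st IH] using (induction_ltof1 _ task_length).
  intros Hst; destruct st as [[|P T] V].
  - exists (fun _ => ([], V)), 0; split; [reflexivity|].
    apply simulation_final; auto.
  - destruct (decodes_progresses _ _ Hst ltac:(discriminate))
      as [(st' & Hstep & Hd & Hlt) | [(st' & x & Hstep & Hd & Hx) | Hstuck]].
    + destruct (IH st' Hlt Hd) as (g & k & Hg0 & Hsim).
      exists (scons ((P :: T), V) g), (S k); split; [reflexivity|].
      apply (simulation_scons i i); [lia | lia | exact Hst | | exact Hsim].
      rewrite Hg0; exact Hstep.
    + destruct (reduct_index i x Hi Hx) as [Hlt ->].
      destruct (Hnext Hlt st' Hd) as (g & k & Hg0 & Hsim).
      exists (scons ((P :: T), V) g), (S k); split; [reflexivity|].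
      apply (simulation_scons i (S i)); [lia | lia | exact Hst | | exact Hsim].
      rewrite Hg0; exact Hstep.
    + destruct (reduct_not_stuck i Hi Hstuck).
Qed.

Lemma simulation_exists (i : nat) :
  i <= j -> forall st, decodes st (f i) -> exists g k, g 0 = st /\ simulation i g k.
Proof.
  induction i as [i IH] using (induction_ltof1 _ (fun i => j - i)); intros Hi.
  apply simulation_within; [exact Hi|].
  intros Hlt; apply IH; [unfold ltof; lia | lia].
Qed.

End Simulation.

Theorem theorem15 :
  forall (s t : term) (j : nat) (f : nat -> term) (m : nat),
    f 0 = s ->
    f j = t ->
    (forall i, i < j -> tstep (f i) (f (S i))) ->
    (exists u, t = tlam u) ->
    max_size_is tsize f j m ->
    exists (P : program) (m' : nat),
      represents P t /\ m <= m' /\ m' <= 2 * m /\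
      exists (k : nat) (g : nat -> state),
        g 0 = init_state s /\
        g k = ([], [P]) /\
        (forall i, i < k -> mstep (g i) (g (S i))) /\
        max_size_is ssize g k m'.
Proof.
  intros s t j f m Hs Ht Hsteps [u Hu] [Hm_bound (i0 & Hi0 & Hm_at)].
  subst s; rewrite Hu in Ht.
  destruct (simulation_exists f j u Hsteps Ht 0 (Nat.le_0_l j) _ (decodes_init (f 0)))
    as (g & k & Hg0 & Hmsteps & Hdec & Hcover & Hgk).
  pose proof (max_size_is_max_upto ssize g k) as Hmax.
  exists (compile u), (max_upto (fun n => ssize (g n)) k).
  split; [exists u; auto|].
  split.
  { destruct (Hcover i0) as (n & Hn & Hd); [lia|].
    pose proof (decodes_size _ _ Hd); pose proof (proj1 Hmax n Hn); lia. }
  split.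
  { destruct (proj2 Hmax) as (n & Hn & <-).
    destruct (Hdec n Hn) as (i & Hi & Hd).
    pose proof (decodes_size _ _ Hd); pose proof (Hm_bound i ltac:(lia)); lia. }
  exists k, g; auto.
Qed.
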